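(* Let $A(z)=\sum_{n\ge0}a_nz^n$ be the generating function of Dyck arches ending with a catastrophe. Then for $n\ge2$, $a_n=\binom{n-2}{\lfloor\frac{n-3}{2}\rfloor}$ (and $a_0=a_1=0$), and \[A(z)=z\,\frac{M(z)-E(z)-M_1(z)}{E(z)}=\frac12\,\frac{2z^2+z-1+\sqrt{(1-2z)(1+2z)(1-z)^2}}{1-2z}=z^3+z^4+3z^5+4z^6+10z^7+15z^8+35z^9+O(z^{10}),\] where $M(z)$, $E(z)$, $M_1(z)$ are the generating functions (by length) of classical Dyck meanders, Dyck excursions, and Dyck meanders ending at altitude $1$, respectively.
   Context: Classical Dyck paths use steps $+1$ and $-1$ (each of weight $1$) and never go below altitude $0$, starting at $0$; a Dyck meander may end anywhere, a Dyck excursion ends at $0$. A Dyck path with catastrophes additionally allows catastrophes: steps from an altitude $h>1$ directly to altitude $0$ (weight $1$). A Dyck arch ending with a catastrophe is a Dyck path with catastrophes starting at altitude $0$ whose last step is a catastrophe and which does not visit altitude $0$ between its start and its end. *)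

From HB Require Import structures.
From mathcomp Require Import all_boot all_order all_algebra.
Set Implicit Arguments. Unset Strict Implicit. Unset Printing Implicit Defensive.
Import Order.TTheory GRing.Theory Num.Theory.

(* Steps: U = +1, D = -1, C = catastrophe (jump from altitude h > 1 to 0).
   Every step has weight 1, so the length of a path is its number of steps. *)
Inductive step := U | D | C.

Fixpoint valid (h : nat) (p : seq step) : bool :=
  match p with
  | [::] => true
  | U :: q => valid h.+1 q
  | D :: q => (0 < h) && valid h.-1 q
  | C :: q => (1 < h) && valid 0 q
  end.

Fixpoint heights (h : nat) (p : seq step) : seq nat :=
  match p with
  | [::] => [::]
  | U :: q => h.+1 :: heights h.+1 q
  | D :: q => h.-1 :: heights h.-1 q
  | C :: q => 0 :: heights 0 q
  end.

Definition final_alt (h : nat) (p : seq step) : nat := last h (heights h p).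

Definition is_C (s : step) : bool := if s is C then true else false.

Fixpoint all_words (n : nat) : seq (seq step) :=
  match n with
  | 0 => [:: [::]]
  | n'.+1 => [seq s :: w | s <- [:: U; D; C], w <- all_words n']
  end.

Definition classical_dyck (p : seq step) : bool := ~~ has is_C p && valid 0 p.

(* Dyck arch ending with a catastrophe: Dyck path with catastrophes starting at 0,
   last step is a catastrophe, and no visit to altitude 0 strictly between start and end *)
Definition arch_cat (p : seq step) : bool :=
  [&& valid 0 p, ~~ nilp p && is_C (last U p)
    & all (fun h => 0 < h) (heights 0 (take (size p).-1 p))].

Definition a_arch (n : nat) : nat := count arch_cat (all_words n).
Definition meander (n : nat) : nat := count classical_dyck (all_words n).
Definition excursion (n : nat) : nat :=
  count (fun p => classical_dyck p && (final_alt 0 p == 0)) (all_words n).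
Definition meander1 (n : nat) : nat :=
  count (fun p => classical_dyck p && (final_alt 0 p == 1)) (all_words n).

(* formal power series with integer coefficients, as coefficient sequences *)
Local Open Scope ring_scope.
Definition sermul (f g : nat -> int) (n : nat) : int :=
  \sum_(k < n.+1) f k * g (n - k)%N.
Definition polyser (p : {poly int}) : nat -> int := fun n => p`_n.
Definition natser (f : nat -> nat) : nat -> int := fun n => (f n)%:Z.
Definition zshift (f : nat -> int) : nat -> int :=
  fun n => if n is m.+1 then f m else 0.

Definition binomz (n : nat) (k : int) : nat :=
  match k with Posz k' => 'C(n, k') | Negz _ => 0%N end.

(* A meander of length n ending at altitude >= k is counted by T(n, k), which
   obeys Pascal's rule T(n+1, k+1) = T(n, k) + T(n, k+2) (look at the last step);
   hence T(n, k) = C(n, floor((n-k)/2)).  An arch ending with a catastrophe of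
   length n+2 is an up step, a meander of length n lifted by one and ending at
   altitude >= 1, and the catastrophe, so a_(n+2) = T(n, 1).  Cutting a meander
   that ends at altitude h >= 2 at its last visit to altitude h - 1 gives
   T(n+1, 2) = sum_i T(i, 1) E_(n-i), i.e. A E = z (M - E - M1).  Finally
   E = 1 + z^2 E^2, (1 - 2z) M = 1 - z E and A = z^2 (M - E) force
   2(1-2z)A - (2z^2+z-1) = (1-z)(1-2z^2 E), whose square is (1-2z)(1+2z)(1-z)^2;
   these series identities are checked on truncations, modulo z^N. *)

From mathcomp Require Import all_boot all_order all_algebra.
From mathcomp Require Import zify ring.
Import Order.TTheory GRing.Theory Num.Theory Pdiv.Idomain.

Set Implicit Arguments.
Unset Strict Implicit.
Unset Printing Implicit Defensive.

Lemma count_all_wordsS (P : pred (seq step)) n :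
  count P (all_words n.+1) =
  (count (fun w => P (U :: w)) (all_words n) +
   count (fun w => P (D :: w)) (all_words n) +
   count (fun w => P (C :: w)) (all_words n))%N.
Proof. by rewrite /= !count_cat !count_map /= addn0 addnA. Qed.

Definition dyck_from (h : nat) (p : seq step) : bool := ~~ has is_C p && valid h p.

Fixpoint ndyck (n h : nat) (P : pred nat) : nat :=
  match n with
  | 0 => P h
  | n'.+1 => ndyck n' h.+1 P + (if 0 < h then ndyck n' h.-1 P else 0)
  end.

Lemma count_dyck_from n h (P : pred nat) :
  count (fun p => dyck_from h p && P (final_alt h p)) (all_words n) = ndyck n h P.
Proof.
elim: n h => [|n IHn] h; first by rewrite /= addn0.
rewrite count_all_wordsS /= -IHn.
have -> : count (fun w => dyck_from h (C :: w) && P (final_alt h (C :: w)))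
            (all_words n) = 0 by rewrite (eq_count (a2 := pred0)) ?count_pred0.
rewrite addn0; congr (_ + _); case: h => [|h] /=; last by rewrite -IHn.
by rewrite (eq_count (a2 := pred0)) ?count_pred0 // => w; rewrite /dyck_from /= andbF.
Qed.

Section DyckCount.

Implicit Types (P Q R : pred nat).

Lemma eq_ndyck n h P Q : P =1 Q -> ndyck n h P = ndyck n h Q.
Proof. by move=> eqPQ; elim: n h => [|n IHn] h /=; rewrite ?eqPQ ?IHn. Qed.

Lemma ndyck_pred0 n h P : P =1 pred0 -> ndyck n h P = 0.
Proof. by move=> P0; elim: n h => [|n IHn] h /=; rewrite ?P0 ?IHn ?if_same. Qed.

Lemma ndyckD n h P Q R : (forall x, P x = Q x + R x :> nat) ->
  ndyck n h P = ndyck n h Q + ndyck n h R.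
Proof.
move=> PQR; elim: n h => [|n IHn] h /=; first exact: PQR.
by rewrite !IHn; case: ifP => _; lia.
Qed.

Lemma ndyckSr n h P :
  ndyck n.+1 h P = ndyck n h (fun x => P x.+1) + ndyck n h (fun x => (0 < x) && P x.-1).
Proof.
elim: n h => [|n IHn] h; first by case: h.
rewrite -[LHS]/(ndyck n.+1 h.+1 P + (if 0 < h then ndyck n.+1 h.-1 P else 0)) !IHn /=.
by case: h => [|h] /=; lia.
Qed.

End DyckCount.

Definition meander_ge (n k : nat) : nat := ndyck n 0 (leq k).
Definition meander_at (n k : nat) : nat := ndyck n 0 (pred1 k).

Lemma meander_ge_nil k : meander_ge 0 k = (k == 0). Proof. by case: k. Qed.
Lemma meander_at_nil k : meander_at 0 k = (k == 0). Proof. by rewrite /meander_at /= eq_sym. Qed.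

Lemma meander_geS n k : meander_ge n.+1 k = meander_ge n k.-1 + meander_ge n k.+1.
Proof.
by rewrite /meander_ge ndyckSr; congr (_ + _); apply: eq_ndyck => x; [case: k | case: x].
Qed.

Lemma meander_atS n k :
  meander_at n.+1 k = (if 0 < k then meander_at n k.-1 else 0) + meander_at n k.+1.
Proof.
rewrite /meander_at ndyckSr; congr (_ + _); last by apply: eq_ndyck; case.
case: k => [|k] /=; first exact: ndyck_pred0.
by apply: eq_ndyck => x /=; rewrite eqSS.
Qed.

Lemma meander_ge_at n k : meander_ge n k = meander_at n k + meander_ge n k.+1.
Proof. by apply: ndyckD => x /=; case: (ltngtP k x). Qed.

Lemma binS_half n : 'C(n.+1, n.+1./2) + 'C(n.+1, n./2) = 'C(n.+2, n.+2./2).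
Proof.
rewrite -[n](odd_double_half n); move: (n./2) => e.
case: (odd n); rewrite /= !add0n ?add1n uphalf_double doubleK binS //.
have -> : e.+1 = e.*2.+1 - e by lia.
by rewrite bin_sub //; lia.
Qed.

Lemma meander_ge_binomial n k :
  meander_ge n k = if k <= n then 'C(n, (n - k)./2) else 0.
Proof.
elim: n k => [|n IHn] k; first by rewrite meander_ge_nil; case: k.
rewrite meander_geS !IHn; case: k => [|k] /=.
  by case: n {IHn} => [|n] //; rewrite !subn0 subn1 binS_half.
case: (leqP k n) => [kn|nk]; last by rewrite !ifF //; apply/negbTE; rewrite -leqNgt; lia.
rewrite ltnS kn subSS -(subnKC kn) addKn; case: (n - k) => [|[|d]].
- by rewrite addn0 ltnNge leqnSn /= !bin0.
- by rewrite ifF ?bin0 //; lia.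
have -> : k + d.+2 - k.+2 = d by lia.
by rewrite ifT ?binS //; lia.
Qed.

(* Combinatorially: cut a path ending at altitude h at its last visit to
   altitude h - k - 1. *)
Section MeanderConvolution.

Variable X : nat -> nat -> nat.
Hypothesis X_nil : forall k, X 0 k = (k == 0).
Hypothesis XS : forall n k, X n.+1 k.+1 = X n k + X n k.+2.

Lemma conv_meander_at n j k :
  X n.+1 (j + k).+1 = \sum_(i < n.+1) X i j * meander_at (n - i) k.
Proof.
elim: n k => [|n IHn] k.
  by rewrite big_ord1 XS !X_nil meander_at_nil; case: j; case: k.
rewrite big_ord_recr /= subnn meander_at_nil.
rewrite (eq_bigr (fun i : 'I_n.+1 =>
    X i j * (if 0 < k then meander_at (n - i) k.-1 else 0)
    + X i j * meander_at (n - i) k.+1)); last first.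
  by move=> i _; rewrite subSn ?meander_atS ?mulnDr // -ltnS ltn_ord.
rewrite big_split /= -IHn XS; case: k => [|k] /=.
  by rewrite big1 => [|i _]; rewrite ?muln0 // !addn0 add0n muln1 addn1 addnC.
by rewrite -IHn muln0 addn0 !addnS.
Qed.

End MeanderConvolution.

Lemma meander_ge_conv n :
  meander_ge n.+1 2 = \sum_(i < n.+1) meander_ge i 1 * meander_at (n - i) 0.
Proof.
exact: (@conv_meander_at _ meander_ge_nil (fun n k => meander_geS n k.+1) n 1 0).
Qed.

Lemma meander_at_conv n :
  meander_at n.+2 0 = \sum_(i < n.+1) meander_at i 0 * meander_at (n - i) 0.
Proof.
rewrite meander_atS add0n.
exact: (@conv_meander_at _ meander_at_nil (fun n k => meander_atS n k.+1) n 0 0).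
Qed.

Lemma meanderE n : meander n = meander_ge n 0.
Proof.
rewrite /meander /meander_ge -count_dyck_from.
by apply: eq_count => p; rewrite andbT.
Qed.

Lemma excursionE n : excursion n = meander_at n 0.
Proof. by rewrite /excursion /meander_at -count_dyck_from. Qed.

Lemma meander1E n : meander1 n = meander_at n 1.
Proof. by rewrite /meander1 /meander_at -count_dyck_from. Qed.

Fixpoint arch_from (h : nat) (p : seq step) : bool :=
  match p with
  | [::] => false
  | U :: q => arch_from h.+1 q
  | D :: q => (1 < h) && arch_from h.-1 q
  | C :: q => (1 < h) && nilp q
  end.

Lemma arch_fromE h p :
  [&& valid h p, ~~ nilp p && is_C (last U p)
    & all (fun h => 0 < h) (heights h (take (size p).-1 p))] = arch_from h p.
Proof.
elim: p h => [|x q IHq] h //=.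
case: (boolP (nilp q)) => [/nilP -> | q_ne0]; first by case: x; rewrite /= ?andbF ?andbT.
have -> : take (size q) (x :: q) = x :: take (size q).-1 q by case: q {IHq} q_ne0.
have -> : last x q = last U q by case: q {IHq} q_ne0.
case: x => /=; last by rewrite !andbF.
  by rewrite -IHq q_ne0.
by rewrite -IHq q_ne0; case: h => [|[|h]]; rewrite /= ?andbF.
Qed.

Lemma count_nilp n : count (@nilp step) (all_words n) = (n == 0).
Proof. by case: n => // n; rewrite count_all_wordsS /= !count_pred0. Qed.

Lemma count_arch_fromS h n : count (arch_from h) (all_words n.+1) =
  count (arch_from h.+1) (all_words n)
  + (if 1 < h then count (arch_from h.-1) (all_words n) + (n == 0) else 0).
Proof.
rewrite count_all_wordsS -addnA; congr (_ + _); case: ifP => h1.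
  by rewrite -count_nilp; congr (_ + _); apply: eq_count => w /=; rewrite h1.
by rewrite !(eq_count (a2 := pred0)) ?count_pred0 // => w /=; rewrite h1.
Qed.

(* Shifted down by one, an arch from h+1 is a classical path from h ending at a
   positive altitude, followed by the catastrophe. *)
Lemma count_arch_from h n :
  count (arch_from h.+1) (all_words n.+1) = ndyck n h (leq 1).
Proof.
elim: n h => [|n IHn] h; rewrite count_arch_fromS; first by case: h.
by rewrite IHn; case: h => [|h] //=; rewrite IHn addn0.
Qed.

Lemma a_arch_meander_ge n : a_arch n.+2 = meander_ge n 1.
Proof. by rewrite /a_arch (eq_count (arch_fromE 0)) count_arch_fromS count_arch_from /= addn0. Qed.

Lemma a_arch_small : a_arch 0 = 0 /\ a_arch 1 = 0 /\ a_arch 2 = 0.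
Proof. by []. Qed.

Lemma a_arch_binomial n : a_arch n.+3 = 'C(n.+1, n./2).
Proof. by rewrite a_arch_meander_ge meander_ge_binomial ltnS subn1. Qed.

Local Open Scope ring_scope.

Lemma sermul_natser (f g : nat -> nat) n :
  sermul (natser f) (natser g) n = (\sum_(k < n.+1) f k * g (n - k))%N%:Z.
Proof. by rewrite /sermul -natz natr_sum; apply: eq_bigr => k _; rewrite natrM !natz. Qed.

Lemma sermul_a_arch_excursion n :
  sermul (natser a_arch) (natser excursion) n
  = zshift (fun m => natser meander m - natser excursion m - natser meander1 m) n.
Proof.
rewrite sermul_natser; case: n => [|[|n]]; first by rewrite big_ord1.
  by rewrite !big_ord_recl big_ord0.
do 2 rewrite big_ord_recl /=.
under eq_bigr => i _ do rewrite /bump !add1n !subSS a_arch_meander_ge excursionE.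
have [a0 [a1 _]] := a_arch_small.
rewrite /bump /= a0 a1 !add0n -meander_ge_conv /natser meanderE excursionE meander1E.
by rewrite (meander_ge_at n.+1 0) (meander_ge_at n.+1 1) !PoszD; ring.
Qed.

Lemma dvdXnP (R : idomainType) N (p : {poly R}) :
  reflect (forall i, (i < N)%N -> p`_i = 0) ('X^N %| p).
Proof.
apply: (iffP (Pdiv.IdomainMonic.dvdpP (monicXn R N) p)) => [[q ->] i iN|p_low].
  by rewrite coefMXn iN.
exists (drop_poly N p); rewrite -[LHS](poly_take_drop N p).
suff -> : take_poly N p = 0 by rewrite add0r.
by apply/polyP => i; rewrite coef_take_poly coef0; case: ifP => // /p_low.
Qed.

Lemma dvdXn_coef_eq (R : idomainType) N (p q : {poly R}) i :
  (i < N)%N -> 'X^N %| p - q -> p`_i = q`_i.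
Proof. by move=> iN /dvdXnP/(_ i iN)/eqP; rewrite coefB subr_eq0 => /eqP. Qed.

(* Modulo d, eliminating M and A leaves S = (1 - X)(1 - 2 X^2 E); squaring and
   eliminating X^2 E^2 leaves the discriminant. *)
Lemma dvdp_sqr_discriminant (R : idomainType) (d A M E S : {poly R}) :
  d %| S - (2 * (1 - 2 * 'X) * A - (2 * 'X^2 + 'X - 1)) ->
  d %| A - 'X^2 * (M - E) ->
  d %| (1 - 2 * 'X) * M - (1 - 'X * E) ->
  d %| E - (1 + 'X^2 * E ^+ 2) ->
  d %| S ^+ 2 - (1 - 2 * 'X) * (1 + 2 * 'X) * (1 - 'X) ^+ 2.
Proof.
move=> dS dA dM dE; set Q := (1 - 'X) * (1 - 2 * 'X^2 * E).
have dSQ : d %| S - Q.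
  have -> : S - Q = (S - (2 * (1 - 2 * 'X) * A - (2 * 'X^2 + 'X - 1)))
      + 2 * (1 - 2 * 'X) * (A - 'X^2 * (M - E))
      + 2 * 'X^2 * ((1 - 2 * 'X) * M - (1 - 'X * E)) by rewrite /Q; ring.
  by do 2?apply: dvdp_add; rewrite // dvdp_mull.
have -> : S ^+ 2 - (1 - 2 * 'X) * (1 + 2 * 'X) * (1 - 'X) ^+ 2
    = (S + Q) * (S - Q) - 4 * 'X^2 * (1 - 'X) ^+ 2 * (E - (1 + 'X^2 * E ^+ 2)).
  by rewrite /Q; ring.
by apply: dvdp_sub; rewrite dvdp_mull.
Qed.

Definition series_trunc (N : nat) (f : nat -> int) : {poly int} := \poly_(i < N) f i.

Lemma coef_series_trunc N f i : (series_trunc N f)`_i = if (i < N)%N then f i else 0.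
Proof. exact: coef_poly. Qed.

Lemma coefM_series_trunc (p : {poly int}) f N i :
  (i < N)%N -> (p * series_trunc N f)`_i = sermul (polyser p) f i.
Proof.
move=> iN; rewrite coefM; apply: eq_bigr => j _.
by rewrite coef_series_trunc (leq_ltn_trans (leq_subr _ _) iN).
Qed.

Lemma coef_series_trunc_mul f g N i :
  (i < N)%N -> (series_trunc N f * series_trunc N g)`_i = sermul f g i.
Proof.
move=> iN; rewrite coefM_series_trunc //; apply: eq_bigr => j _.
by rewrite /polyser coef_series_trunc (leq_ltn_trans _ iN) // -ltnS.
Qed.

Section TruncatedSeries.

Variable N : nat.
Local Notation A := (series_trunc N (natser a_arch)).
Local Notation M := (series_trunc N (natser meander)).
Local Notation E := (series_trunc N (natser excursion)).

Lemma excursion_series_dvdp : 'X^N %| E - (1 + 'X^2 * E ^+ 2).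
Proof.
apply/dvdXnP => i iN; rewrite coefB coef_series_trunc iN coefD coef1 coefXnM.
case: i iN => [|[|i]] iN //=.
rewrite subn2 /= add0r expr2 coef_series_trunc_mul; last by lia.
rewrite sermul_natser; under eq_bigr do rewrite !excursionE.
by rewrite /natser excursionE meander_at_conv subrr.
Qed.

Lemma meander_series_dvdp : 'X^N %| (1 - 2 * 'X) * M - (1 - 'X * E).
Proof.
apply/dvdXnP => i iN.
rewrite mulrBl mul1r -mulrA mulr_natl !coefB coefMn coefXM coef1 coefXM !coef_series_trunc iN.
case: i iN => [|i] iN /=; first by rewrite subr0 /natser meanderE meander_ge_nil subrr.
rewrite ltnW // /natser !meanderE excursionE meander_geS /= (meander_ge_at i 0) !PoszD; ring.
Qed.

Lemma arch_series_dvdp : 'X^N %| A - 'X^2 * (M - E).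
Proof.
apply/dvdXnP => i iN; rewrite coefB coef_series_trunc iN coefXnM.
case: i iN => [|[|i]] iN //=.
have iN' : (i < N)%N by lia.
rewrite subn2 /= coefB !coef_series_trunc iN'.
by rewrite /natser a_arch_meander_ge meanderE excursionE (meander_ge_at i 0) PoszD; ring.
Qed.

Lemma sermul_series_dvdp (p q : {poly int}) f :
  'X^N %| series_trunc N (fun n => sermul (polyser p) f n - polyser q n)
          - (p * series_trunc N f - q).
Proof.
apply/dvdXnP => i iN.
by rewrite coefB coef_series_trunc iN coefB coefM_series_trunc // subrr.
Qed.

End TruncatedSeries.

Theorem proposition3p2 :
  let A := natser a_arch in
  let M := natser meander in
  let E := natser excursion in
  let M1 := natser meander1 in
  (* S(z) := 2(1-2z)A(z) - (2z^2+z-1), which must be the square root with S(0)=1 *)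
  let S := fun n => sermul (polyser (2%:P * (1 - 2%:P * 'X))) A n
                    - polyser (2%:P * 'X^2 + 'X - 1) n in
  [/\ a_arch 0 = 0%N /\ a_arch 1 = 0%N,
      (forall n : nat, (2 <= n)%N ->
         a_arch n = binomz (n - 2) ((n%:Z - 3) %/ 2)%Z),
      (* A(z) E(z) = z (M(z) - E(z) - M1(z)) *)
      (forall n : nat, sermul A E n = zshift (fun m => M m - E m - M1 m) n),
      (* 2(1-2z) A(z) = 2z^2 + z - 1 + sqrt((1-2z)(1+2z)(1-z)^2) *)
      (S 0%N = 1 /\ (forall n : nat,
         sermul S S n = polyser ((1 - 2%:P * 'X) * (1 + 2%:P * 'X) * (1 - 'X) ^+ 2) n))
    & [seq a_arch n | n <- iota 0 10] = [:: 0; 0; 0; 1; 1; 3; 4; 10; 15; 35]%N].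
Proof.
move=> A M E M1 S; have [a0 [a1 a2]] := a_arch_small.
split; first by [].
- case=> [|[|[|n]]] // _.
  have -> : (n.+3%:Z - 3 = n)%Z by lia.
  by rewrite a_arch_binomial divz_nat divn2.
- exact: sermul_a_arch_excursion.
- split=> [|n]; first by rewrite /S /sermul big_ord1 /A /natser a0 mulr0 /polyser !coefE.
  rewrite /polyser -(coef_series_trunc_mul _ _ (ltnSn n)) -expr2.
  apply: (dvdXn_coef_eq (ltnSn n)); rewrite !polyC_natr.
  have dS : 'X^(n.+1) %| series_trunc n.+1 S
                       - (2 * (1 - 2 * 'X) * series_trunc n.+1 A - (2 * 'X^2 + 'X - 1)).
    by rewrite -!polyC_natr; apply: sermul_series_dvdp.
  exact: dvdp_sqr_discriminant dS (arch_series_dvdp _) (meander_series_dvdp _)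
    (excursion_series_dvdp _).
- by rewrite /= a0 a1 a2 !a_arch_binomial.
Qed.
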